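(* Let $\mathscr X\in\mathbb R^{I_1\times\cdots\times I_N}$ be a nonzero tensor, fix $n$ with $1\leq n\leq N$, and set $R=\operatorname{rank}(\mathbf X_{(n)})$. Let $j_1<\cdots<j_R$ be the indices of $R$ linearly independent rows of $\mathbf X_{(n)}$, and define $\mathbf A\in\mathbb R^{R\times I_n}$ by $a_{st}=1$ if $t=j_s$ and $a_{st}=0$ otherwise. Set $\mathscr Y=\mathscr X\times_n\mathbf A$. Then $\mathscr Y$ is a subtensor of $\mathscr X$, and $\operatorname{rank}(\mathbf Y_{(m)})=\operatorname{rank}(\mathbf X_{(m)})$ for every $m$ with $1\leq m\leq N$.
   Context: All tensors are real. For $\mathscr X\in\mathbb R^{I_1\times\cdots\times I_N}$, the mode-$n$ unfolding $\mathbf X_{(n)}\in\mathbb R^{I_n\times (\prod_{k\neq n}I_k)}$ is the matrix whose rows are indexed by $i_n$ and whose columns are exactly the vectors $(x_{i_1\cdots i_N})_{i_n=1}^{I_n}$ obtained by fixing all indices other than $i_n$ (in a fixed standard order of the remaining indices). The mode-$n$ product of $\mathscr X$ with $\mathbf A\in\mathbb R^{J\times I_n}$ is the tensor $\mathscr X\times_n\mathbf A\in\mathbb R^{I_1\times\cdots\times I_{n-1}\times J\times I_{n+1}\times\cdots\times I_N}$ with entries $(\mathscr X\times_n\mathbf A)_{i_1\cdots i_{n-1}j i_{n+1}\cdots i_N}=\sum_{i_n=1}^{I_n}x_{i_1\cdots i_N}a_{j i_n}$. A subtensor of $\mathscr X$ is a tensor $\mathscr Y\in\mathbb R^{J_1\times\cdots\times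 J_N}$ with $1\le J_n\le I_n$ of the form $y_{j_1\cdots j_N}=x_{i_{1j_1}\cdots i_{Nj_N}}$ for some indices $1\leq i_{n1}<\cdots<i_{nJ_n}\leq I_n$, $1\le n\le N$. *)

From HB Require Import structures.
From mathcomp Require Import all_boot all_order all_algebra.
From mathcomp Require Import reals.
Set Implicit Arguments. Unset Strict Implicit. Unset Printing Implicit Defensive.
Import Order.TTheory GRing.Theory Num.Theory.
Local Open Scope ring_scope.

(* Tensors of order N with dimensions I k (mode k = 0..N-1 stands for 1..N). *)
Section Tensors.
Variable K : realType.
Variable N : nat.

Definition idx (I : 'I_N -> nat) := {dffun forall k : 'I_N, 'I_(I k)}.
Definition tensor (I : 'I_N -> nat) := {ffun idx I -> K}.

Definition mk_idx (I : 'I_N -> nat) (v : 'I_N -> nat) (H : forall k, (v k < I k)%N)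
  : idx I := [ffun k => Ordinal (H k)].

Definition upd (I : 'I_N -> nat) (n : 'I_N) (J : nat) : 'I_N -> nat :=
  fun k => if k == n then J else I k.

Lemma upd_n (I : 'I_N -> nat) n J : upd I n J n = J.
Proof. by rewrite /upd eqxx. Qed.

Lemma set_idx_proof (I : 'I_N -> nat) n J (jj : idx (upd I n J)) (i : 'I_(I n)) k :
  ((if k == n then val i else val (jj k)) < I k)%N.
Proof.
case: eqP => [->|/eqP ne]; first exact: ltn_ord.
have h : upd I n J k = I k by rewrite /upd (negbTE ne).
by rewrite -h; exact: ltn_ord.
Qed.

Definition set_idx (I : 'I_N -> nat) n J (jj : idx (upd I n J)) (i : 'I_(I n)) : idx I :=
  mk_idx (set_idx_proof jj i).

Definition modeJ (I : 'I_N -> nat) n J (jj : idx (upd I n J)) : 'I_J :=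
  cast_ord (upd_n I n J) (jj n).

Definition mode_prod (I : 'I_N -> nat) (n : 'I_N) (J : nat) (X : tensor I)
  (A : 'M[K]_(J, I n)) : tensor (upd I n J) :=
  [ffun jj => \sum_(i < I n) X (set_idx jj i) * A (modeJ jj) i].

Definition cols (I : 'I_N -> nat) (n : 'I_N) :=
  {dffun forall k : {k : 'I_N | k != n}, 'I_(I (val k))}.

Lemma merge_proof (I : 'I_N -> nat) n (i : 'I_(I n)) (c : cols I n) k :
  ((if (insub k : option {k0 : 'I_N | k0 != n}) is Some k' then val (c k')
    else val i) < I k)%N.
Proof.
case: insubP => [k' _ <-|]; first exact: ltn_ord.
by move/negPn/eqP->; exact: ltn_ord.
Qed.

Definition merge (I : 'I_N -> nat) n (i : 'I_(I n)) (c : cols I n) : idx I :=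
  mk_idx (merge_proof i c).

(* mode-n unfolding: rows indexed by i_n, columns by the remaining indices
   (in the enumeration order of the finite type cols I n) *)
Definition unfold (I : 'I_N -> nat) (X : tensor I) (n : 'I_N)
  : 'M[K]_(I n, #|{: cols I n}|) :=
  \matrix_(i < I n, c < #|{: cols I n}|) X (merge i (enum_val c)).

Definition subtensor (I J : 'I_N -> nat) (Y : tensor J) (X : tensor I) : Prop :=
  (forall k, 1 <= J k <= I k)%N /\
  exists f : forall k : 'I_N, 'I_(J k) -> 'I_(I k),
    (forall k (a b : 'I_(J k)), (a < b)%N -> (f k a < f k b)%N) /\
    forall jj : idx J, Y jj = X (mk_idx (fun k => ltn_ord (f k (jj k)))).

End Tensors.

From HB Require Import structures.
From mathcomp Require Import all_boot all_order all_algebra.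
From mathcomp Require Import reals.
Set Implicit Arguments. Unset Strict Implicit. Unset Printing Implicit Defensive.
Import Order.TTheory GRing.Theory Num.Theory.
Local Open Scope ring_scope.

(* A mode-n product never increases the rank of any unfolding: for m = n the
   unfolding is multiplied on the left by A, for m <> n each of its columns is
   a combination of columns of the unfolding of X.  Hence Y = X x_n A gives
   rank Y_(m) <= rank X_(m).  Conversely the selected rows span the rows of
   X_(n), say X_(n) = D A X_(n); then X = Y x_n D, which gives the reverse
   inequality. *)

Section RankComb.
Variable F : fieldType.

Lemma mxrank_col_comb_le p p' a b k (M : 'M[F]_(p, a)) (M' : 'M[F]_(p', b))
    (σ : 'I_p' -> 'I_p) (φ : 'I_b -> 'I_k -> 'I_a) (w : 'I_b -> 'I_k -> F) :
  (forall r c, M' r c = \sum_(i < k) M (σ r) (φ c i) * w c i) ->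
  (\rank M' <= \rank M)%N.
Proof.
move=> hM'.
pose W := \matrix_(c, c') \sum_(i < k) (c == φ c' i)%:R * w c' i : 'M[F]_(a, b).
have -> : M' = rowsub σ (M *m W).
  apply/matrixP => r c'; rewrite hM' !mxE.
  under [RHS]eq_bigr do rewrite mxE big_distrr.
  rewrite exchange_big /=; apply: eq_bigr => i _.
  rewrite (bigD1 (φ c' i)) //= big1 => [|c /negbTE ->]; last by rewrite mul0r mulr0.
  by rewrite eqxx mul1r addr0.
exact: leq_trans (mxrankS (rowsub_sub _ _)) (mxrankM_maxl M W).
Qed.

Lemma mxrank_row_comb_le p p' a b k (M : 'M[F]_(p, a)) (M' : 'M[F]_(p', b))
    (τ : 'I_k -> 'I_p) (φ : 'I_b -> 'I_a) (w : 'I_p' -> 'I_k -> F) :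
  (forall r c, M' r c = \sum_(i < k) w r i * M (τ i) (φ c)) ->
  (\rank M' <= \rank M)%N.
Proof.
move=> hM'; rewrite -mxrank_tr -[\rank M]mxrank_tr.
apply: (mxrank_col_comb_le (σ := φ) (φ := fun _ i => τ i) (w := fun r i => w r i)).
by move=> c r; rewrite !mxE hM'; apply: eq_bigr => i _; rewrite mxE mulrC.
Qed.

Lemma submx_rowsub_rank m m' n (f : 'I_m' -> 'I_m) (A : 'M[F]_(m, n)) :
  \rank (rowsub f A) = \rank A -> (A <= rowsub f A)%MS.
Proof.
by case: (mxrank_leqif_sup (rowsub_sub f A)) => _ <- ->; rewrite eqxx.
Qed.

End RankComb.

Section Indices.
Variables (N : nat) (I : 'I_N -> nat).

Lemma idx_eq (a b : idx I) : (forall k, (a k : nat) = b k) -> a = b.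
Proof. by move=> h; apply/ffunP => k; apply/val_inj; exact: h. Qed.

Lemma merge_mode m (i : 'I_(I m)) (c : cols I m) : merge i c m = i.
Proof. by apply/val_inj; rewrite /merge /mk_idx ffunE /= insubF // eqxx. Qed.

Lemma merge_other m (i : 'I_(I m)) (c : cols I m) k (h : k != m) :
  merge i c k = c (exist _ k h).
Proof. by apply/val_inj; rewrite /merge /mk_idx ffunE /= insubT. Qed.

Definition split_idx m (ii : idx I) : cols I m := [ffun k => ii (val k)].

Lemma merge_split m (ii : idx I) : merge (ii m) (split_idx m ii) = ii.
Proof.
apply: idx_eq => k; case: (eqVneq k m) => [->|h]; first by rewrite merge_mode.
by rewrite (merge_other _ _ h) ffunE.
Qed.

Lemma upd_other n J k : k != n -> upd I n J k = I k.
Proof. by move=> h; rewrite /upd (negbTE h). Qed.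

End Indices.

Lemma unfoldE (K : realType) N (I : 'I_N -> nat) (X : tensor K I) m i c :
  unfold X m i c = X (merge i (enum_val c)).
Proof. by rewrite mxE. Qed.

Lemma unfold_eq0 (K : realType) N (I : 'I_N -> nat) (X : tensor K I) m :
  (unfold X m == 0) = (X == 0).
Proof.
apply/eqP/eqP => [X0|->]; last by apply/matrixP => i c; rewrite !mxE ffunE.
apply/ffunP => ii; rewrite ffunE -(merge_split m ii).
by rewrite -[split_idx m ii]enum_rankK -unfoldE X0 mxE.
Qed.

Lemma tensor_dim_gt0 (K : realType) N (I : 'I_N -> nat) (X : tensor K I) :
  X != 0 -> forall k, (0 < I k)%N.
Proof.
move=> + k; rewrite lt0n; apply: contra => /eqP Ik; apply/eqP/ffunP => ii.
by have := ltn_ord (ii k); move: (ii k : nat); rewrite Ik.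
Qed.

Section Transfer.
Variables (K : realType) (N : nat) (I J : 'I_N -> nat) (n : 'I_N).
Hypothesis eJI : forall k, k != n -> J k = I k.

Lemma transfer_proof k (a : 'I_(J k)) (i : 'I_(I n)) :
  ((if k == n then val i else val a) < I k)%N.
Proof. by case: eqP => [->|/eqP /eJI <-]; exact: ltn_ord. Qed.

Definition transfer_idx (jj : idx J) (i : 'I_(I n)) : idx I :=
  mk_idx (fun k => transfer_proof (jj k) i).

Definition transfer_cols m (c : cols J m) (i : 'I_(I n)) : cols I m :=
  [ffun k => Ordinal (transfer_proof (c k) i)].

Definition cast_cols (c : cols J n) : cols I n :=
  [ffun k => cast_ord (eJI (valP k)) (c k)].

Lemma transfer_idx_mode jj i : transfer_idx jj i n = i.
Proof. by apply/val_inj; rewrite ffunE /= eqxx. Qed.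

Lemma transfer_idx_other jj i k : k != n -> (transfer_idx jj i k : nat) = jj k.
Proof. by move=> h; rewrite ffunE /= (negbTE h). Qed.

Lemma transfer_merge_mode (r : 'I_(J n)) (c : cols J n) i :
  transfer_idx (merge r c) i = merge i (cast_cols c).
Proof.
apply: idx_eq => k; case: (eqVneq k n) => [->|h].
  by rewrite transfer_idx_mode merge_mode.
by rewrite transfer_idx_other // !(merge_other _ _ h) ffunE.
Qed.

Lemma transfer_merge_other m (h : m != n) (r : 'I_(J m)) (c : cols J m) i :
  transfer_idx (merge r c) i = merge (cast_ord (eJI h) r) (transfer_cols c i).
Proof.
apply: idx_eq => k; case: (eqVneq k m) => [->|km].
  by rewrite transfer_idx_other // !merge_mode.
by rewrite [in RHS](merge_other _ _ km) !ffunE /= insubT.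
Qed.

(* Z = X x_n A stated entrywise, so that the dimensions J of Z need only agree
   with those of X off mode n propositionally. *)
Variables (X : tensor K I) (Z : tensor K J) (A : 'I_(J n) -> 'I_(I n) -> K).
Hypothesis ZE : forall jj, Z jj = \sum_i A (jj n) i * X (transfer_idx jj i).

Lemma mxrank_unfold_comb_le m : (\rank (unfold Z m) <= \rank (unfold X m))%N.
Proof.
case: (eqVneq m n) => [->|h].
  apply: (mxrank_row_comb_le (τ := id)
    (φ := fun c => enum_rank (cast_cols (enum_val c))) (w := A)) => r c.
  rewrite unfoldE ZE merge_mode; apply: eq_bigr => i _.
  by rewrite unfoldE enum_rankK transfer_merge_mode.
have nm : n != m by rewrite eq_sym.
apply: (mxrank_col_comb_le (σ := cast_ord (eJI h))
  (φ := fun c i => enum_rank (transfer_cols (enum_val c) i))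
  (w := fun c i => A (enum_val c (exist _ n nm)) i)) => r c.
rewrite unfoldE ZE (merge_other _ _ nm); apply: eq_bigr => i _.
by rewrite unfoldE enum_rankK transfer_merge_other mulrC.
Qed.

End Transfer.

Lemma set_idx_transfer N (I : 'I_N -> nat) n J
    (jj : idx (upd I n J)) (i : 'I_(I n)) :
  set_idx jj i = transfer_idx (fun k => @upd_other N I n J k) jj i.
Proof. by apply: idx_eq => k; rewrite /set_idx /transfer_idx /mk_idx !ffunE. Qed.

Lemma mxrank_unfold_mode_prod_le (K : realType) N (I : 'I_N -> nat)
    (X : tensor K I) n J (A : 'M[K]_(J, I n)) m :
  (\rank (unfold (mode_prod X A) m) <= \rank (unfold X m))%N.
Proof.
apply: (mxrank_unfold_comb_le (eJI := fun k => @upd_other N I n J k)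
  (A := fun r i => A (cast_ord (upd_n I n J) r) i)).
by move=> jj; rewrite /mode_prod ffunE; apply: eq_bigr => i _; rewrite mulrC set_idx_transfer.
Qed.

Section Selection.
Variables (K : realType) (N : nat) (I : 'I_N -> nat) (X : tensor K I).
Variables (n : 'I_N) (R : nat) (j : 'I_R -> 'I_(I n)).

Definition select_mx : 'M[K]_(R, I n) := \matrix_(s, t) (t == j s)%:R.

(* The junk branch of the inner match is never taken on 'I_(upd I n R n). *)
Definition sel_nat (k : 'I_N) (a : nat) : nat :=
  if k == n then (if insub a is Some s then val (j s) else a) else a.

Lemma sel_nat_mode (a : 'I_(upd I n R n)) :
  sel_nat n a = j (cast_ord (upd_n I n R) a).
Proof.
rewrite /sel_nat eqxx; case: insubP => [s _ sa|/negP[]].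
  by congr (val (j _)); apply: val_inj.
exact: (valP (cast_ord (upd_n I n R) a)).
Qed.

Lemma sel_nat_other k a : k != n -> sel_nat k a = a.
Proof. by move=> h; rewrite /sel_nat (negbTE h). Qed.

Lemma sel_nat_lt k (a : 'I_(upd I n R k)) : (sel_nat k a < I k)%N.
Proof.
move: a; case: (eqVneq k n) => [-> a|h a]; first by rewrite sel_nat_mode ltn_ord.
by rewrite sel_nat_other // -(upd_other I R h) ltn_ord.
Qed.

Definition sel_ord k (a : 'I_(upd I n R k)) : 'I_(I k) := Ordinal (sel_nat_lt a).

Definition select_idx (jj : idx (upd I n R)) : idx I :=
  mk_idx (fun k => ltn_ord (sel_ord (jj k))).

Lemma select_idx_mode jj : select_idx jj n = j (modeJ jj).
Proof. by apply/val_inj; rewrite /select_idx /mk_idx ffunE /= sel_nat_mode. Qed.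

Lemma select_idx_other jj k : k != n -> (select_idx jj k : nat) = jj k.
Proof. by move=> h; rewrite /select_idx /mk_idx ffunE /= sel_nat_other. Qed.

Lemma mode_prod_selectE jj : mode_prod X select_mx jj = X (select_idx jj).
Proof.
rewrite /mode_prod /select_mx ffunE (bigD1 (j (modeJ jj))) //= big1 => [|i /negbTE ji].
  rewrite mxE eqxx mulr1 addr0; congr (X _); apply: idx_eq => k.
  rewrite /set_idx /mk_idx ffunE /=; case: (eqVneq k n) => [->|h].
    by rewrite select_idx_mode.
  by rewrite select_idx_other.
by rewrite mxE ji /= mulr0.
Qed.

Lemma subtensor_select :
  (forall s t : 'I_R, (s < t)%N -> (j s < j t)%N) ->
  (0 < R <= I n)%N -> (forall k, 0 < I k)%N ->
  subtensor (mode_prod X select_mx) X.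
Proof.
move=> jmono hR Ipos; split.
  by move=> k; rewrite /upd; case: eqP => [->|_]; rewrite ?hR ?Ipos ?leqnn.
exists sel_ord; split; last exact: mode_prod_selectE.
move=> k; case: (eqVneq k n) => [-> a b ab|h a b ab] /=.
  by rewrite !sel_nat_mode; exact: jmono.
by rewrite !sel_nat_other.
Qed.

Lemma tensor_row_span (D : 'M[K]_(I n, R)) :
  unfold X n = D *m rowsub j (unfold X n) ->
  forall ii, X ii = \sum_s D (ii n) s * X (merge (j s) (split_idx n ii)).
Proof.
move=> /matrixP XD ii.
have -> : X ii = unfold X n (ii n) (enum_rank (split_idx n ii)).
  by rewrite unfoldE enum_rankK merge_split.
by rewrite XD mxE; apply: eq_bigr => s _; rewrite !mxE enum_rankK.
Qed.

Lemma mxrank_unfold_le_select :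
  (unfold X n <= rowsub j (unfold X n))%MS ->
  forall m, (\rank (unfold X m) <= \rank (unfold (mode_prod X select_mx) m))%N.
Proof.
case/submxP => D /tensor_row_span XE m; pose e := upd_n I n R.
apply: (mxrank_unfold_comb_le (eJI := fun k h => esym (@upd_other N I n R k h))
  (A := fun r s => D r (cast_ord e s))) => ii.
rewrite XE (reindex (cast_ord e)) /=; last first.
  by exists (cast_ord (esym e)) => s _; [exact: cast_ordK | exact: cast_ordKV].
apply: eq_bigr => s _; rewrite mode_prod_selectE; congr (_ * X _).
apply: idx_eq => k; case: (eqVneq k n) => [->|h].
  by rewrite select_idx_mode merge_mode /modeJ transfer_idx_mode.
by rewrite select_idx_other // transfer_idx_other // (merge_other _ _ h) ffunE.
Qed.

End Selection.

Theorem lemma3p4 (K : realType) (N : nat) (I : 'I_N -> nat) (X : tensor K I)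
  (n : 'I_N) (j : 'I_(\rank (unfold X n)) -> 'I_(I n)) :
  X != 0 ->
  (forall s t : 'I_(\rank (unfold X n)), (s < t)%N -> (j s < j t)%N) ->
  row_free (rowsub j (unfold X n)) ->
  let A : 'M[K]_(\rank (unfold X n), I n) := \matrix_(s, t) (t == j s)%:R in
  let Y := mode_prod X A in
  subtensor Y X /\
  forall m : 'I_N, \rank (unfold Y m) = \rank (unfold X m).
Proof.
move=> X0 jmono jfree A Y; split.
  apply: subtensor_select => //; last exact: (tensor_dim_gt0 X0).
  by rewrite lt0n mxrank_eq0 unfold_eq0 X0 rank_leq_row.
move=> m; apply/eqP; rewrite eqn_leq mxrank_unfold_mode_prod_le /=.
apply: mxrank_unfold_le_select; apply: submx_rowsub_rank.
by move: jfree; rewrite /row_free => /eqP.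
Qed.
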